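(* Let $\mathcal B$ be a finite set of finite Cornish algebras of type $F$ and let $\mathcal Y=\{D(\mathbf A)\mid \mathbf A\in\mathcal B\}$. Then the algebras in $\mathcal B$ are quasi-primal and share a common ternary discriminator term provided: (i) each $\mathbb X\in\mathcal Y$ has no non-empty proper substructures, and (ii) there exists a unary term $t$ in the signature $F$ with $t\in T^-$ such that, for all $\mathbb X\in\mathcal Y$ and all $a\in X$, the orbit of $a$ under $t^{\mathbb X}$ eventually reaches an odd cycle. Moreover, if (ii) is replaced by (ii)$'$ there exists a unary term $t$ in the signature $F$ with $t\in T^-$ such that, for all $\mathbb X\in\mathcal Y$, the map $t^{\mathbb X}$ is constant, then (under (i) and (ii)$'$) the algebras in $\mathcal B$ are semi-primal and share a common ternary discriminator term.
   Context: $F=F^+\,\dot\cup\,F^-$ is a set of unary operation symbols. A Cornish algebra of type $F$: a bounded distributive lattice with unary operations $f^{\mathbf A}$ ($f\in F$), an endomorphism for $f\in F^+$ and a dual endomorphism for $f\in F^-$. A Cornish space of type $F$: a Priestley space with unary operations $f^{\mathbb X}$ that are continuous order-preserving for $f\in F^+$ and continuous order-reversing for $f\in F^-$. A substructure is a closed subset closed under all $f^{\mathbb X}$. $D(\mathbf A)$: the set of bounded-lattice homomorphisms from the lattice reduct of $\mathbf A$ to $\mathbf 2$, ordered pointwise, topology from $\{0,1\}^A$, with $f^{D(\mathbf A)}(x)=x\circ f^{\mathbf A}$ for $f\in F^+$ and $c\circ x\circ f^{\mathbf A}$ for $f\in F^-$ ($c$ Boolean complement on $\{0,1\}$). Unary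 terms in the signature $F$ are finite composites $f_1(f_2(\cdots f_k(v)))$ of symbols of $F$; $T^-$ is the set of such terms containing an odd number of occurrences of symbols from $F^-$ (so $t^{\mathbb X}$ is order-reversing for $t\in T^-$), and $t^{\mathbb X}$ is the corresponding composite of the maps $f^{\mathbb X}$. The orbit of $a$ under a self-map $g$ of a finite set is $a,g(a),g^2(a),\dots$; choosing $n<m$ with $a,g(a),\dots,g^{m-1}(a)$ pairwise distinct and $g^m(a)=g^n(a)$, the orbit eventually reaches an odd cycle if $m-n$ is odd. Quasi-primal: finite algebra with the ternary discriminator ($\tau(x,y,z)=x$ if $x\ne y$, $=z$ if $x=y$) as a term function; share a common ternary discriminator term: one ternary term induces $\tau$ on each. Semi-primal: finite algebra with a majority term such that every subalgebra of $\mathbf A^2$ is a product of subalgebras or the graph of the identity on a subalgebra. *)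

From HB Require Import structures.
From mathcomp Require Import all_boot all_order.
Set Implicit Arguments. Unset Strict Implicit. Unset Printing Implicit Defensive.
Import Order.TTheory.
Local Open Scope order_scope.

(* The type F = F^+ \dot\cup F^- is a type F with a polarity map:
   neg f = true  iff  f \in F^-. *)

Record cornish (F : Type) (neg : F -> bool) := Cornish {
  cdisp : Order.disp_t;
  ccar : finTBDistrLatticeType cdisp;
  cop : F -> ccar -> ccar;
  cop_meet : forall f (x y : ccar),
    cop f (x `&` y) = if neg f then cop f x `|` cop f y else cop f x `&` cop f y;
  cop_join : forall f (x y : ccar),
    cop f (x `|` y) = if neg f then cop f x `&` cop f y else cop f x `|` cop f y;
  cop_bot : forall f, cop f \bot = if neg f then \top else \bot;
  cop_top : forall f, cop f \top = if neg f then \bot else \top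
}.
Arguments cornish : clear implicits.
Arguments cop {F neg} c f x.

Inductive term (F V : Type) : Type :=
| TVar of V
| TBot
| TTop
| TMeet of term F V & term F V
| TJoin of term F V & term F V
| TOp of F & term F V.
Arguments TBot {F V}. Arguments TTop {F V}.

Fixpoint teval F neg (A : cornish F neg) V (e : V -> ccar A) (t : term F V)
  : ccar A :=
  match t with
  | TVar v => e v
  | TBot => \bot
  | TTop => \top
  | TMeet t1 t2 => teval e t1 `&` teval e t2
  | TJoin t1 t2 => teval e t1 `|` teval e t2
  | TOp f t1 => cop A f (teval e t1)
  end.

Definition env3 (T : Type) (x y z : T) : 'I_3 -> T :=
  fun i => nth x [:: x; y; z] i.

Definition discr (T : eqType) (x y z : T) : T := if x != y then x else z.

Definition is_discriminator_term F neg (A : cornish F neg) (t : term F 'I_3) :=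
  forall x y z : ccar A, teval (env3 x y z) t = discr x y z.

Definition is_majority_term F neg (A : cornish F neg) (t : term F 'I_3) :=
  forall x y : ccar A,
    [/\ teval (env3 x x y) t = x, teval (env3 x y x) t = x
      & teval (env3 y x x) t = x].

Definition quasi_primal F neg (A : cornish F neg) :=
  exists t : term F 'I_3, is_discriminator_term A t.

Definition subuniv F neg (A : cornish F neg) (S : {set ccar A}) :=
  [/\ \bot \in S, \top \in S,
      (forall x y, x \in S -> y \in S -> x `&` y \in S),
      (forall x y, x \in S -> y \in S -> x `|` y \in S)
    & (forall f x, x \in S -> cop A f x \in S)].

Definition subuniv2 F neg (A : cornish F neg) (S : {set ccar A * ccar A}) :=
  [/\ (\bot, \bot) \in S, (\top, \top) \in S,
      (forall p q, p \in S -> q \in S -> (p.1 `&` q.1, p.2 `&` q.2) \in S),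
      (forall p q, p \in S -> q \in S -> (p.1 `|` q.1, p.2 `|` q.2) \in S)
    & (forall f p, p \in S -> (cop A f p.1, cop A f p.2) \in S)].

Definition semi_primal F neg (A : cornish F neg) :=
  (exists m : term F 'I_3, is_majority_term A m) /\
  forall S : {set ccar A * ccar A}, subuniv2 S ->
    (exists B1 B2 : {set ccar A}, [/\ subuniv B1, subuniv B2 & S = setX B1 B2])
    \/ (exists B : {set ccar A}, subuniv B /\ S = [set (b, b) | b in B]).

Definition Dpts F neg (A : cornish F neg) : {set {ffun ccar A -> bool}} :=
  [set x : {ffun ccar A -> bool} |
     [&& [forall a, forall b, x (a `&` b) == x a && x b],
         [forall a, forall b, x (a `|` b) == x a || x b],
         x \bot == false & x \top == true]].

Definition Dop F neg (A : cornish F neg) (f : F) (x : {ffun ccar A -> bool})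
  : {ffun ccar A -> bool} :=
  [ffun a => if neg f then ~~ x (cop A f a) else x (cop A f a)].

Arguments Dop {F neg} A f x.

(** Substructure of D(A): subset of D(A) closed under all f^{D(A)}.
    (D(A) is finite with the discrete topology, so every subset is closed.) *)
Definition Dsubstructure F neg (A : cornish F neg) (S : {set {ffun ccar A -> bool}}) :=
  S \subset Dpts A /\ forall (f : F) x, x \in S -> Dop A f x \in S.

(** Unary terms f_1(f_2(...f_k(v))) represented as [:: f_1; ...; f_k]. *)
Definition uterm_D F neg (A : cornish F neg) (t : seq F) (x : {ffun ccar A -> bool}) :=
  foldr (fun f y => Dop A f y) x t.

Definition in_Tminus F (neg : F -> bool) (t : seq F) := odd (count neg t).

Definition reaches_odd_cycle (T : Type) (g : T -> T) (a : T) :=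
  exists n m : nat, [/\ (n < m)%N,
     (forall i j, (i < m)%N -> (j < m)%N -> iter i g a = iter j g a -> i = j),
     iter m g a = iter n g a & odd (m - n)].

(* Prime filters separate the elements of a finite distributive lattice, so
   equalities in A can be checked at the points of D(A).  Under (ii) there is
   an odd M with t^(2M) = t^M on every D(A).  At a point p, with c = t^M(p),
   the term t^(2M)((x /\ t^M y) \/ (t^M x /\ y)) takes the value [c x != c y];
   by (i) every point is reached from c by a unary term, so a finite join of
   such terms, one word for each pair of points of each D(A), is a common term
   for [x != y], and (t(x != y) /\ z) \/ ((x != y) /\ x) is a common
   discriminator.  Under (ii)' one can take M = 1, and t maps A into {0, 1};
   this pins every functional subalgebra of A^2 to the diagonal, while the
   discriminator turns every other subalgebra into a product. *)

From mathcomp Require Import all_boot all_order.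
From mathcomp Require Import boolp zify.
Set Implicit Arguments. Unset Strict Implicit. Unset Printing Implicit Defensive.
Import Order.TTheory.

Lemma iter_cycle (T : Type) (g : T -> T) a n m :
  n <= m -> iter m g a = iter n g a ->
  forall r j, n <= r -> iter (r + (m - n) * j) g a = iter r g a.
Proof.
move=> le_nm gmn r j le_nr; elim: j => [|j IH]; first by rewrite muln0 addn0.
have -> : r + (m - n) * j.+1 = (r + (m - n) * j - n) + m.
  by rewrite mulnS; move: ((m - n) * j) => x; lia.
by rewrite iterD gmn -iterD subnK // (leq_trans le_nr (leq_addr _ _)).
Qed.

Lemma odd_cycle_period (T : Type) (g : T -> T) a : reaches_odd_cycle g a ->
  exists L, odd L /\ forall k, 0 < k -> L %| k -> iter (k + k) g a = iter k g a.
Proof.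
(* Multiples of L exceed the tail length n and are multiples of the period. *)
case=> n [m [lt_nm _ gmn odd_mn]]; exists ((m - n) * n.*2.+1); split.
  by rewrite oddM odd_mn /= odd_double.
move=> k k_gt0 /dvdnP[q kq]; rewrite kq in k_gt0 *.
rewrite [in X in iter (_ + X)]mulnC -mulnA iter_cycle ?(ltnW lt_nm) //.
have q_gt0 : 0 < q by move: k_gt0; rewrite muln_gt0 => /andP[].
apply: leq_trans (leq_pmull _ q_gt0); apply: leq_trans (leq_pmull _ _); last first.
  by rewrite subn_gt0.
by rewrite -addnn ltnW // ltnS leq_addr.
Qed.

Lemma odd_common_period (K : finType) (Q : K -> nat -> Prop) :
  (forall k, exists L, odd L /\ forall n, 0 < n -> L %| n -> Q k n) ->
  exists M, odd M /\ forall k n, 0 < n -> M %| n -> Q k n.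
Proof.
move=> /boolp.choice[L LP]; exists (\prod_k L k); split=> [|k n n_gt0 dvd_n].
  by elim/big_ind: _ => // [x y ox oy|k _]; rewrite ?oddM ?ox ?oy ?(LP k).1.
have [_ QL] := LP k; apply: QL n_gt0 _; apply: dvdn_trans dvd_n.
by rewrite (bigD1 k) //= dvdn_mulr.
Qed.

Lemma has_flatten (T : Type) (a : pred T) (ss : seq (seq T)) :
  has a (flatten ss) = has (has a) ss.
Proof. by elim: ss => //= s ss IH; rewrite has_cat IH. Qed.

Section Words.
Variables (F : Type) (neg : F -> bool).

Lemma in_Tminus_cat (w1 w2 : seq F) :
  in_Tminus neg (w1 ++ w2) = in_Tminus neg w1 (+) in_Tminus neg w2.
Proof. by rewrite /in_Tminus count_cat oddD. Qed.

Lemma in_Tminus_pow n (w : seq F) :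
  in_Tminus neg (flatten (nseq n w)) = odd n && in_Tminus neg w.
Proof.
elim: n => //= n IH; rewrite in_Tminus_cat IH.
by case: (in_Tminus neg w); rewrite ?andbT ?andbF.
Qed.

End Words.

Local Open Scope order_scope.

Lemma exists_minimal (disp : Order.disp_t) (T : finPOrderType disp) (P : pred T) a :
  P a -> exists2 j, P j & forall y, y < j -> ~~ P y.
Proof.
move=> Pa; have [j Pj jmin] := arg_minnP (fun j => #|[pred y : T | y <= j]|) Pa.
exists j => // y; apply: contraTN => Py; apply: contraTN (jmin y Py) => ltyj.
rewrite -ltnNge; apply/proper_card/properP; split.
  by apply/subsetP => z; rewrite !inE => /le_trans; apply; apply: ltW.
by exists j; rewrite !inE ?lexx // lt_geF.
Qed.

Lemma prime_filter_separation (disp : Order.disp_t) (L : finTBDistrLatticeType disp)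
    (a b : L) :
  ~~ (a <= b) ->
  exists p : L -> bool, [/\ {morph p : x y / x `&` y >-> x && y},
    {morph p : x y / x `|` y >-> x || y}, p \bot = false, p \top = true
    & p a && ~~ p b].
Proof.
move=> nab; pose P j := (j <= a) && ~~ (j <= b).
have [|j /andP[ja njb] jmin] := exists_minimal (_ : P a); first by rewrite /P lexx.
have below_b x : ~~ (j <= x) -> j `&` x <= b.
  move=> njx; have := jmin (j `&` x); rewrite lt_neqAle eq_meetl njx leIl.
  by rewrite /P negb_and negbK (le_trans (leIl _ _) ja) => /(_ isT).
exists (fun x => j <= x); split=> [x y|x y|||]; rewrite ?lexI ?lex1 ?ja //.
- apply/idP/idP=> [jxy|/lexU2//]; apply/negPn/negP.
  rewrite negb_or => /andP[/below_b jx /below_b jy].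
  by rewrite -(meet_l jxy) meetUr leUx jx jy in njb.
- by apply: contraNF njb; rewrite lex0 => /eqP->.
Qed.

Section DualSpace.
Variables (F : Type) (neg : F -> bool) (A : cornish F neg).
Implicit Types (a b : ccar A) (p x : {ffun ccar A -> bool}) (w : seq F).

Definition Dsimple := forall S, @Dsubstructure F neg A S -> S = set0 \/ S = Dpts A.

(* The letters of a word act on A in the reverse of their order on D(A). *)
Definition uterm_A w a := foldl (fun a f => cop A f a) a w.

Lemma DptsP p : p \in Dpts A ->
  [/\ {morph p : a b / a `&` b >-> a && b}, {morph p : a b / a `|` b >-> a || b},
      p \bot = false & p \top = true].
Proof.
rewrite inE => /and4P[/'forall_forallP pI /'forall_forallP pU /eqP p0 /eqP p1].
by split=> // a b; apply/eqP.
Qed.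

Lemma Dpts_ffun (p : ccar A -> bool) :
  {morph p : a b / a `&` b >-> a && b} -> {morph p : a b / a `|` b >-> a || b} ->
  p \bot = false -> p \top = true -> [ffun a => p a] \in Dpts A.
Proof.
move=> pI pU p0 p1; rewrite inE !ffunE p0 p1 !eqxx !andbT.
by apply/andP; split; apply/'forall_forallP => a b; rewrite !ffunE ?pI ?pU.
Qed.

Lemma Dpts_sep a b : a != b -> exists2 p, p \in Dpts A & p a != p b.
Proof.
rewrite eq_le negb_and => /orP[] /prime_filter_separation[p [pI pU p0 p1 sep]];
  exists [ffun z => p z]; rewrite ?Dpts_ffun // !ffunE;
  by case: (p a) (p b) sep => [] [].
Qed.

Lemma Dpts_eq a b : {in Dpts A, forall p, p a = p b} -> a = b.
Proof.
by move=> sep; apply/eqP/negPn/negP => /Dpts_sep[p /sep->]; rewrite eqxx.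
Qed.

Lemma Dop_Dpts f p : p \in Dpts A -> Dop A f p \in Dpts A.
Proof.
case/DptsP=> pI pU p0 p1; apply: Dpts_ffun => [a b|a b||];
  rewrite (cop_meet, cop_join, cop_bot, cop_top);
  by case: (neg f); rewrite ?pI ?pU ?p0 ?p1 ?negb_and ?negb_or.
Qed.

Lemma uterm_D_Dpts w p : p \in Dpts A -> uterm_D w p \in Dpts A.
Proof. by move=> pD; elim: w => //= f w; apply: Dop_Dpts. Qed.

Lemma uterm_D_cat w1 w2 p : uterm_D (w1 ++ w2) p = uterm_D w1 (uterm_D w2 p).
Proof. exact: foldr_cat. Qed.

Lemma uterm_D_pow n w p : uterm_D (flatten (nseq n w)) p = iter n (uterm_D w) p.
Proof. by elim: n => //= n IH; rewrite uterm_D_cat IH. Qed.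

Lemma uterm_DE w p a : uterm_D w p a = in_Tminus neg w (+) p (uterm_A w a).
Proof.
elim: w a => //= f w IH a; rewrite ffunE IH /in_Tminus /= oddD.
by case: (neg f); rewrite ?addbA ?negb_add.
Qed.

Lemma Dsimple_reachable :
  Dsimple -> {in Dpts A &, forall c q, exists w, uterm_D w c = q}.
Proof.
move=> simple c q cD qD; pose R := [set y | `[< exists w, uterm_D w c = y >]].
have RS : Dsubstructure R.
  split=> [|f y]; last by rewrite !inE => /asboolP[w <-]; apply/asboolP; exists (f :: w).
  by apply/subsetP => y; rewrite inE => /asboolP[w <-]; apply: uterm_D_Dpts.
have [R0|RD] := simple R RS; last by move: qD; rewrite -RD inE => /asboolP.
by have := in_set0 c; rewrite -R0 inE; case: asboolP => // -[]; exists [::].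
Qed.

Lemma Dsimple_words : Dsimple ->
  exists W : seq (seq F), {in Dpts A &, forall c q, has (fun w => uterm_D w c == q) W}.
Proof.
move=> /Dsimple_reachable reach; pose pt := {ffun ccar A -> bool}.
have gex (cq : pt * pt) : exists w,
    cq.1 \in Dpts A -> cq.2 \in Dpts A -> uterm_D w cq.1 = cq.2.
  case: cq => c q /=; have [[cD qD]|nD] := pselect (c \in Dpts A /\ q \in Dpts A).
    by have [w <-] := reach c q cD qD; exists w.
  by exists [::] => cD qD; case: nD.
have [g gP] := boolp.choice gex.
exists (map g (enum {: pt * pt})) => c q cD qD.
by rewrite has_map; apply/hasP; exists (c, q); rewrite ?mem_enum //= gP.
Qed.

End DualSpace.

Section DiscriminatorTerm.
Variables (F V : Type) (t : seq F) (M : nat) (W : seq (seq F)).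
Implicit Types s : term F V.

Definition tuterm (w : seq F) s := foldl (fun s f => TOp f s) s w.

Definition word_pow := flatten (nseq M t).

Definition diff_term s1 s2 :=
  tuterm (word_pow ++ word_pow)
    (TJoin (TMeet s1 (tuterm word_pow s2)) (TMeet (tuterm word_pow s1) s2)).

Definition neq_term s1 s2 :=
  \big[@TJoin F V/TBot]_(w <- W) diff_term (tuterm w s1) (tuterm w s2).

Definition discr_term s1 s2 s3 :=
  TJoin (TMeet (tuterm t (neq_term s1 s2)) s3) (TMeet (neq_term s1 s2) s1).

End DiscriminatorTerm.

Section DiscriminatorEval.
Variables (F : Type) (neg : F -> bool) (A : cornish F neg).
Variables (t : seq F) (M : nat) (W : seq (seq F)) (V : Type) (e : V -> ccar A).
Hypotheses (t_neg : in_Tminus neg t) (M_odd : odd M).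
Local Notation T := (uterm_D (A := A) t).
Hypothesis T_period : {in Dpts A, forall p, iter (M + M) T p = iter M T p}.
Hypothesis W_reach :
  {in Dpts A &, forall c q, has (fun w => uterm_D (A := A) w c == q) W}.
Implicit Types (s : term F V) (p : {ffun ccar A -> bool}).

Lemma teval_tuterm w s : teval e (tuterm w s) = uterm_A w (teval e s).
Proof. by elim: w s => //= f w IH s; rewrite IH. Qed.

Lemma Dpts_tuterm p w s :
  p (teval e (tuterm w s)) = in_Tminus neg w (+) uterm_D w p (teval e s).
Proof. by rewrite teval_tuterm uterm_DE addbA addbb. Qed.

Lemma Dpts_diff_term p s1 s2 : p \in Dpts A ->
  p (teval e (diff_term t M s1 s2)) =
  (iter M T p (teval e s1) != iter M T p (teval e s2)).
Proof.
move=> pD; set c := iter M T p.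
have cD : c \in Dpts A by rewrite /c -uterm_D_pow uterm_D_Dpts.
have Tc : iter M T c = c by rewrite /c -iterD T_period.
rewrite /diff_term Dpts_tuterm in_Tminus_cat addbb uterm_D_cat /word_pow.
rewrite !uterm_D_pow -iterD T_period // -/c.
have [cI cU _ _] := DptsP cD; rewrite /= cU !cI !Dpts_tuterm.
by rewrite in_Tminus_pow M_odd t_neg !uterm_D_pow Tc; case: (c _); case: (c _).
Qed.

Lemma Dpts_neq_term p s1 s2 : p \in Dpts A ->
  p (teval e (neq_term t M W s1 s2)) = (teval e s1 != teval e s2).
Proof.
move=> pD; have [_ pU p0 _] := DptsP pD; set c := iter M T p.
have cD : c \in Dpts A by rewrite /c -uterm_D_pow uterm_D_Dpts.
have p_join : {morph (fun s => p (teval e s)) : s s' / TJoin s s' >-> s || s'}.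
  by move=> s s'; rewrite /= pU.
rewrite /neq_term (big_morph _ p_join (_ : _ = false)) //.
set a1 := teval e s1; set a2 := teval e s2.
rewrite big_has (eq_has (a2 := fun w => uterm_D w c a1 != uterm_D w c a2)); last first.
  move=> w /=; rewrite Dpts_diff_term // !Dpts_tuterm.
  by case: (in_Tminus neg w); rewrite /= ?eqb_negLR ?negbK.
case: eqVneq => [<-|/Dpts_sep[q qD qa12]].
  by rewrite (eq_has (a2 := pred0)) ?has_pred0 // => w; rewrite /= eqxx.
by apply: sub_has (W_reach cD qD) => w /eqP ->.
Qed.

Lemma discr_termE s1 s2 s3 : teval e (discr_term t M W s1 s2 s3) =
  discr (teval e s1) (teval e s2) (teval e s3).
Proof.
apply: Dpts_eq => p pD; have [pI pU _ _] := DptsP pD.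
rewrite /= pU !pI Dpts_tuterm t_neg /= !Dpts_neq_term ?uterm_D_Dpts //.
by rewrite /discr; case: eqVneq; rewrite /= ?andbF ?orbF ?andbT.
Qed.

End DiscriminatorEval.

Section CommonDiscriminator.
Variables (F : Type) (neg : F -> bool).

Lemma Dpts_odd_period (I : finType) (B : I -> cornish F neg) t :
  (forall i a, a \in Dpts (B i) -> reaches_odd_cycle (uterm_D (A := B i) t) a) ->
  exists M, odd M /\ forall i, {in Dpts (B i), forall p,
    iter (M + M) (uterm_D (A := B i) t) p = iter M (uterm_D (A := B i) t) p}.
Proof.
move=> cycles.
have [M [M_odd M_period]] : exists M, odd M /\ forall i n, (0 < n)%N -> (M %| n)%N ->
    {in Dpts (B i), forall p, iter (n + n) (uterm_D t) p = iter n (uterm_D t) p}.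
  apply: odd_common_period => i.
  have [M [M_odd M_period]] : exists M, odd M /\ forall p n, (0 < n)%N -> (M %| n)%N ->
      p \in Dpts (B i) -> iter (n + n) (uterm_D t) p = iter n (uterm_D t) p.
    apply: odd_common_period => p; have [pD|pD] := boolP (p \in Dpts (B i)).
      have [L [L_odd L_period]] := odd_cycle_period (cycles i p pD).
      by exists L; split=> // n n_gt0 dvd_n _; apply: L_period.
    by exists 1%N; split=> // n _ _ pD'; rewrite pD' in pD.
  by exists M; split=> // n n_gt0 dvd_n p; apply: M_period.
by exists M; split=> // i; apply: M_period (dvdnn M); rewrite odd_gt0.
Qed.

Lemma common_discriminator (I : finType) (B : I -> cornish F neg) t M :
  (forall i, Dsimple (B i)) -> in_Tminus neg t -> odd M ->
  (forall i, {in Dpts (B i), forall p,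
     iter (M + M) (uterm_D (A := B i) t) p = iter M (uterm_D (A := B i) t) p}) ->
  exists d : term F 'I_3, forall i, is_discriminator_term (B i) d.
Proof.
move=> simple t_neg M_odd T_period.
have [Ws WsP] := boolp.choice (fun i => Dsimple_words (simple i)).
pose W := flatten [seq Ws i | i <- enum I].
exists (discr_term t M W (TVar F ord0) (TVar F (Ordinal (isT : (1 < 3)%N)))
                         (TVar F ord_max)).
move=> i x y z; rewrite (discr_termE _ t_neg M_odd (T_period i)) // => c q cD qD.
by rewrite has_flatten has_map; apply/hasP; exists i; rewrite ?mem_enum //= WsP.
Qed.
End CommonDiscriminator.

Section SemiPrimal.
Variables (F : Type) (neg : F -> bool) (A : cornish F neg).
Implicit Types (S : {set ccar A * ccar A}) (a b : ccar A).

Definition median_term V (s1 s2 s3 : term F V) :=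
  TJoin (TJoin (TMeet s1 s2) (TMeet s2 s3)) (TMeet s1 s3).

Lemma median_term_majority :
  is_majority_term A (median_term (TVar F ord0) (TVar F (Ordinal (isT : (1 < 3)%N)))
                                  (TVar F ord_max)).
Proof.
move=> x y; split; apply: Dpts_eq => p /DptsP[pI pU _ _];
  by rewrite /= !pU !pI; case: (p x); case: (p y).
Qed.

Lemma subuniv2_uterm_A S w a b :
  subuniv2 S -> (a, b) \in S -> (uterm_A w a, uterm_A w b) \in S.
Proof.
by case=> _ _ _ _ Sop; elim: w a b => //= f w IH a b ab; apply/IH/(Sop f (a, b)).
Qed.

Lemma subuniv2_teval V S (e1 e2 : V -> ccar A) : subuniv2 S ->
  (forall v, (e1 v, e2 v) \in S) -> forall s, (teval e1 s, teval e2 s) \in S.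
Proof.
case=> S0 S1 SI SU Sop eS; elim=> //= [s1 IH1 s2 IH2|s1 IH1 s2 IH2|f s IH].
- exact: SI IH1 IH2.
- exact: SU IH1 IH2.
- exact: Sop f _ IH.
Qed.

Lemma subuniv2_discr S d x1 y1 x2 y2 x3 y3 :
  is_discriminator_term A d -> subuniv2 S ->
  (x1, y1) \in S -> (x2, y2) \in S -> (x3, y3) \in S ->
  (discr x1 x2 x3, discr y1 y2 y3) \in S.
Proof.
move=> dP Ss S1 S2 S3; rewrite -!dP; apply: subuniv2_teval => // -[[|[|[|//]]] ?] //.
Qed.

Lemma subuniv_imset (pi : ccar A * ccar A -> ccar A) S :
  (forall a, pi (a, a) = a) ->
  (forall p q, pi (p.1 `&` q.1, p.2 `&` q.2) = pi p `&` pi q) ->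
  (forall p q, pi (p.1 `|` q.1, p.2 `|` q.2) = pi p `|` pi q) ->
  (forall f p, pi (cop A f p.1, cop A f p.2) = cop A f (pi p)) ->
  subuniv2 S -> subuniv (pi @: S).
Proof.
move=> pi_diag pi_meet pi_join pi_op [S0 S1 SI SU Sop].
split=> [||_ _ /imsetP[p pS ->] /imsetP[q qS ->]|_ _ /imsetP[p pS ->] /imsetP[q qS ->]|
         f _ /imsetP[p pS ->]]; apply/imsetP.
- by exists (\bot, \bot).
- by exists (\top, \top).
- by exists (p.1 `&` q.1, p.2 `&` q.2); rewrite ?SI.
- by exists (p.1 `|` q.1, p.2 `|` q.2); rewrite ?SU.
- by exists (cop A f p.1, cop A f p.2); rewrite ?Sop.
Qed.

Lemma subuniv_fst S : subuniv2 S -> subuniv (fst @: S).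
Proof. exact: subuniv_imset. Qed.

Lemma subuniv_snd S : subuniv2 S -> subuniv (snd @: S).
Proof. exact: subuniv_imset. Qed.

Lemma subuniv2_setX S d a b b' : is_discriminator_term A d -> subuniv2 S ->
  (a, b) \in S -> (a, b') \in S -> b != b' -> S = setX (fst @: S) (snd @: S).
Proof.
move=> dP Ss ab ab' bb'; have [S0 S1 _ _ _] := Ss.
have to_b u v : (u, v) \in S -> (u, b) \in S.
  by move=> uv; have := subuniv2_discr dP Ss ab ab' uv; rewrite /discr eqxx bb'.
have bot_top : \bot != \top :> ccar A.
  apply: contraNneq bb' => bt; have all_bot (x : ccar A) : x = \bot.
    by apply: le_anti; rewrite le0x andbT bt lex1.
  by rewrite (all_bot b) (all_bot b').
apply/setP => -[u w]; rewrite inE /=; apply/idP/andP => [uw|].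
  by split; apply/imsetP; exists (u, w).
case=> /imsetP[[u1 v] uv /= ->] /imsetP[[x w1] xw /= ->].
pose u' : ccar A := if u1 == \bot then \top else \bot.
have uu' : u1 != u' by rewrite /u'; case: (eqVneq u1 \bot) => [->|].
have u'b : (u', b) \in S by apply: (to_b _ u'); rewrite /u'; case: eqP.
by have := subuniv2_discr dP Ss (to_b _ _ uv) u'b xw; rewrite /discr uu' eqxx.
Qed.

Section ConstantTerm.
Variable t : seq F.
Hypotheses (simple : Dsimple A) (t_neg : in_Tminus neg t).
Hypothesis t_const : {in Dpts A &, forall x y, uterm_D t x = uterm_D t y}.

Lemma subuniv2_diag S : subuniv2 S ->
  (forall a b b', (a, b) \in S -> (a, b') \in S -> b = b') ->
  S = [set (a, a) | a in fst @: S].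
Proof.
move=> Ss func; have [S0 S1 _ _ _] := Ss.
suff diag a b : (a, b) \in S -> a = b.
  apply/setP => -[a b]; apply/idP/imsetP => [ab|[_ /imsetP[[a' b'] ab' ->] [-> ->]]].
    by exists a; [apply/imsetP; exists (a, b)|rewrite (diag _ _ ab)].
  by move: (ab'); rewrite -(diag _ _ ab').
move=> ab; have [D0|[x0 x0D]] := set_0Vmem (Dpts A).
  by apply: Dpts_eq => p; rewrite D0 inE.
pose c0 := uterm_D t x0; have c0D : c0 \in Dpts A by apply: uterm_D_Dpts.
have tA_pt u p : p \in Dpts A -> p (uterm_A t u) = ~~ c0 u.
  by move=> pD; rewrite /c0 -(t_const pD x0D) uterm_DE t_neg negbK.
have tA_const u : uterm_A t u = if c0 u then \bot else \top.
  apply: Dpts_eq => p pD; have [_ _ p0 p1] := DptsP pD.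
  by rewrite tA_pt //; case: (c0 u).
have tA_diag u : (uterm_A t u, uterm_A t u) \in S by rewrite tA_const; case: (c0 u).
have c0S a' b' : (a', b') \in S -> c0 a' = c0 b'.
  move=> /(subuniv2_uterm_A t Ss)/func/(_ (tA_diag a')) eq_tA.
  by apply: negb_inj; rewrite -!(tA_pt _ _ c0D) eq_tA.
apply: Dpts_eq => q qD; have [w <-] := Dsimple_reachable simple c0D qD.
by rewrite !(uterm_DE w) (c0S _ _ (subuniv2_uterm_A w Ss ab)).
Qed.

Lemma semi_primal_of_const_term d :
  is_discriminator_term A d -> semi_primal A.
Proof.
move=> dP; split=> [|S Ss]; first by eexists; apply: median_term_majority.
have [[a [b [b' [ab ab' bb']]]]|func] :=
  pselect (exists a b b', [/\ (a, b) \in S, (a, b') \in S & b != b']).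
  left; exists (fst @: S), (snd @: S).
  split; [exact: subuniv_fst|exact: subuniv_snd|].
  exact: subuniv2_setX dP Ss ab ab' bb'.
right; exists (fst @: S); split; first exact: subuniv_fst.
apply: subuniv2_diag => // a b b' ab ab'; apply/eqP/negPn/negP => bb'.
by apply: func; exists a, b, b'.
Qed.

End ConstantTerm.

End SemiPrimal.

Local Close Scope order_scope.
Unset Implicit Arguments.

Theorem theorem5p11 (F : Type) (neg : F -> bool) (I : finType)
  (B : I -> cornish F neg) :
  (* (i) no non-empty proper substructures *)
  (forall i (S : {set {ffun ccar (B i) -> bool}}),
     Dsubstructure S -> S = set0 \/ S = Dpts (B i)) ->
  (* (ii) => quasi-primal with a common discriminator term *)
  ((exists t : seq F, in_Tminus neg t /\
      forall i, forall a, a \in Dpts (B i) ->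
        reaches_odd_cycle (uterm_D (A := B i) t) a) ->
   (forall i, quasi_primal (B i)) /\
   exists d : term F 'I_3, forall i, is_discriminator_term (B i) d)
  /\
  (* (ii)' => semi-primal with a common discriminator term *)
  ((exists t : seq F, in_Tminus neg t /\
      forall i, forall x y, x \in Dpts (B i) -> y \in Dpts (B i) ->
        uterm_D (A := B i) t x = uterm_D (A := B i) t y) ->
   (forall i, semi_primal (B i)) /\
   exists d : term F 'I_3, forall i, is_discriminator_term (B i) d).
Proof.
move=> simple; split.
  case=> t [t_neg /Dpts_odd_period[M [M_odd M_period]]].
  have [d dP] := common_discriminator simple t_neg M_odd M_period.
  by split=> [i|]; exists d.
case=> t [t_neg t_const].
have [d dP] : exists d : term F 'I_3, forall i, is_discriminator_term (B i) d.
  apply: (common_discriminator (M := 1) simple t_neg) => // i p pD.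
  by rewrite /= (t_const i _ p) ?uterm_D_Dpts.
split=> [i|]; last by exists d.
exact: (semi_primal_of_const_term (A := B i) (simple i) t_neg (t_const i) (dP i)).
Qed.
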